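(* Let $G$ be a graph with no isolated vertex and $H$ a nontrivial graph with $\gamma(H)=1$. Then there exists a $\gamma_{(1,0,0)}^s(G\circ H)$-function $f$ such that $f(V(H_u))=\sum_{y\in V(H)}f(u,y)\le2$ for every $u\in V(G)$.
   Context: All graphs are finite and simple; nontrivial means at least two vertices; $\gamma(H)$ is the domination number. For a graph $G$, a function $f:V(G)\to\{0,1,2\}$ is a $(1,0,0)$-dominating function if every vertex $v$ with $f(v)=0$ satisfies $\sum_{u\in N(v)}f(u)\ge1$ ($N(v)$ the open neighbourhood). For adjacent $v,u$ with $f(v)=0$, $f(u)>0$, $f_{u\to v}$ is defined by $f_{u\to v}(v)=1$, $f_{u\to v}(u)=f(u)-1$, $f_{u\to v}(x)=f(x)$ otherwise. $f$ is a secure $(1,0,0)$-dominating function if it is $(1,0,0)$-dominating and for every $v$ with $f(v)=0$ there is $u\in N(v)$ with $f(u)>0$ such that $f_{u\to v}$ is $(1,0,0)$-dominating. $\gamma_{(1,0,0)}^s(G)$ (the weak Roman domination number) is the minimum of $\sum_v f(v)$ over such functions, and a $\gamma_{(1,0,0)}^s(G)$-function is one attaining this minimum. The lexicographic product $G\circ H$ has vertex set $V(G)\times V(H)$, with $(u,v)(x,y)$ an edge iff $ux\in E(G)$, or $u=x$ and $vy\in E(H)$; $H_u$ is the subgraph induced by $\{u\}\times V(H)$. *)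

From mathcomp Require Import all_boot.
Set Implicit Arguments. Unset Strict Implicit. Unset Printing Implicit Defensive.

Record sgraph (T : finType) := SGraph {
  adj : rel T;
  adj_sym : symmetric adj;
  adj_irrefl : irreflexive adj }.

Definition nbhd (T : finType) (G : sgraph T) (v : T) : {set T} :=
  [set u | adj G v u].

Definition no_isolated (T : finType) (G : sgraph T) : Prop :=
  forall v : T, exists u, adj G v u.

(* domination number: minimum size of a dominating set (V(G) itself dominates) *)
Definition gamma (T : finType) (G : sgraph T) : nat :=
  \big[minn/#|T|]_(D : {set T} | [forall v, (v \in D) || [exists u in D, adj G v u]]) #|D|.

(* functions V -> {0,1,2}, represented as nat-valued with values <= 2 *)
Definition labelling (T : finType) (f : T -> nat) : Prop := forall v, f v <= 2.

Definition weight (T : finType) (f : T -> nat) : nat := \sum_(v : T) f v.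

Definition dom100 (T : finType) (G : sgraph T) (f : T -> nat) : Prop :=
  forall v, f v = 0 -> 1 <= \sum_(u in nbhd G v) f u.

Definition fmove (T : finType) (f : T -> nat) (u v : T) : T -> nat :=
  fun x => if x == v then 1 else if x == u then (f u).-1 else f x.

Definition secure_dom100 (T : finType) (G : sgraph T) (f : T -> nat) : Prop :=
  labelling f /\ dom100 G f /\
  forall v, f v = 0 ->
    exists u, [/\ adj G v u, 0 < f u & dom100 G (fmove f u v)].

Definition wrd_function (T : finType) (G : sgraph T) (f : T -> nat) : Prop :=
  secure_dom100 G f /\
  forall g : T -> nat, secure_dom100 G g -> weight f <= weight g.

Definition lex_adj (T1 T2 : finType) (G : sgraph T1) (H : sgraph T2) :
  rel (prod T1 T2) :=
  fun p q => adj G p.1 q.1 || ((p.1 == q.1) && adj H p.2 q.2).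

Lemma lex_adj_sym T1 T2 (G : sgraph T1) (H : sgraph T2) :
  symmetric (lex_adj G H).
Proof.
move=> [a b] [c d]; rewrite /lex_adj /=.
by rewrite [adj G a c]adj_sym [adj H b d]adj_sym [a == c]eq_sym.
Qed.

Lemma lex_adj_irrefl T1 T2 (G : sgraph T1) (H : sgraph T2) :
  irreflexive (lex_adj G H).
Proof. by move=> [a b]; rewrite /lex_adj /= (adj_irrefl G a) (adj_irrefl H b) andbF. Qed.

Definition lexprod (T1 T2 : finType) (G : sgraph T1) (H : sgraph T2) :
  sgraph (prod T1 T2) :=
  @SGraph _ (lex_adj G H) (lex_adj_sym G H) (lex_adj_irrefl G H).

From mathcomp Require Import all_boot.
From Stdlib Require Import Classical.
Set Implicit Arguments. Unset Strict Implicit.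

(* Fix a vertex h dominating H and a gamma^s_(1,0,0)-function f of G o H.
   If some layer H_u carried weight at least 3, put weight 2 on (u, h) and 0
   on the rest of H_u.  The vertex (u, h) is adjacent to every other vertex of
   H_u and to every vertex outside H_u that has a neighbour in H_u, so it
   dominates and defends all of them; the vertices with no neighbour in H_u see
   no change.  The result is a lighter secure (1,0,0)-dominating function,
   which is impossible. *)

Lemma ex_minimizer (A : Type) (P : A -> Prop) (m : A -> nat) :
  (exists a, P a) -> exists2 a, P a & forall b, P b -> m a <= m b.
Proof.
move=> [a0 Pa0].
suff min_from n a :
    P a -> m a = n -> exists2 a, P a & forall b, P b -> m a <= m b.
  exact: min_from Pa0 erefl.
elim/ltn_ind: n a => n IH a Pa En; subst n.
case: (classic (exists b, P b /\ m b < m a)) => [[b [Pb lt_ba]]|no_lt].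
  exact: IH lt_ba b Pb erefl.
exists a => // b Pb; rewrite leqNgt; apply/negP => lt_ba.
by apply: no_lt; exists b.
Qed.

Lemma secure_dom100_const1 (T : finType) (G : sgraph T) :
  secure_dom100 G (fun _ => 1).
Proof. by split; [|split] => v. Qed.

Lemma wrd_function_exists (T : finType) (G : sgraph T) :
  exists f, wrd_function G f.
Proof.
have [f secf minf] :=
  ex_minimizer (@weight T) (ex_intro _ _ (secure_dom100_const1 G)).
by exists f.
Qed.

Lemma gamma_eq1_dominating_vertex (T : finType) (H : sgraph T) :
  gamma H = 1 -> exists h, forall y, (y == h) || adj H y h.
Proof.
rewrite /gamma => gammaH.
have [D [domD /cards1P [h eq_D]]] :
    exists D : {set T}, [forall v, (v \in D) || [exists u in D, adj H v u]]
                        /\ #|D| == 1.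
  rewrite -gammaH; apply: (big_ind (fun k => exists D : {set T},
     [forall v, (v \in D) || [exists u in D, adj H v u]] /\ #|D| == k)).
  - by exists setT; rewrite cardsT; split => //; apply/forallP => v; rewrite in_setT.
  - by move=> k l exk exl; rewrite /minn; case: ifP.
  - by move=> D domD; exists D.
exists h => y; move/forallP/(_ y): domD; rewrite eq_D in_set1.
case/orP => [-> //|/existsP [z /andP [/set1P -> ->]]].
exact: orbT.
Qed.

Section Layer.
Variables (T1 T2 : finType) (G : sgraph T1) (H : sgraph T2).
Variables (u : T1) (h : T2).
Hypothesis h_dom : forall y, (y == h) || adj H y h.

Notation GH := (lexprod G H).

Definition le_off_layer (f g : T1 * T2 -> nat) : Prop :=
  forall q, q.1 != u -> f q <= g q.

Lemma lex_adj_hub (p : T1 * T2) :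
  p != (u, h) -> (p.1 == u) || adj G p.1 u -> adj GH p (u, h).
Proof.
case: p => w z /= ne_hub; rewrite /= /lex_adj /=.
case/orP => [/eqP eq_wu|-> //]; rewrite eq_wu eqxx /=.
case/orP: (h_dom z) => [/eqP eq_zh|-> //]; last exact: orbT.
by move: ne_hub; rewrite eq_wu eq_zh eqxx.
Qed.

Lemma lex_adj_off_layer (p q : T1 * T2) :
  p.1 != u -> ~~ adj G p.1 u -> adj GH p q -> q.1 != u.
Proof.
move=> pu nadj; rewrite /= /lex_adj.
case/orP => [adj_pq|/andP [/eqP <- _] //].
by apply: contraNneq nadj => <-.
Qed.

Lemma dom100_hub (f g : T1 * T2 -> nat) :
  dom100 GH f -> 1 <= g (u, h) -> le_off_layer f g -> dom100 GH g.
Proof.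
move=> domf g_hub le_fg p gp0.
have [p_hub|p_hub] := eqVneq p (u, h); first by move: g_hub; rewrite -p_hub gp0.
have [near|far] := boolP ((p.1 == u) || adj G p.1 u).
  apply: leq_trans g_hub _.
  by rewrite (bigD1 (u, h)) ?inE ?lex_adj_hub //= leq_addr.
rewrite negb_or in far; case/andP: far => pu nadj.
have fp0 : f p = 0 by apply/eqP; rewrite -leqn0 -gp0 le_fg.
apply: leq_trans (domf p fp0) _; apply: leq_sum => q.
by rewrite inE => /(lex_adj_off_layer pu nadj); apply: le_fg.
Qed.

Lemma le_off_layer_fmove (f g : T1 * T2 -> nat) x v :
  le_off_layer f g -> le_off_layer (fmove f x v) (fmove g x v).
Proof.
move=> le_fg q qu; rewrite /fmove.
case: eqP => // _; case: eqP => [eq_qx|_]; last exact: le_fg.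
by rewrite -!subn1 leq_sub2r // -eq_qx le_fg.
Qed.

Definition collapse_layer (f : T1 * T2 -> nat) : T1 * T2 -> nat :=
  fun p => if p.1 == u then (if p.2 == h then 2 else 0) else f p.

Lemma collapse_layer_hub f : collapse_layer f (u, h) = 2.
Proof. by rewrite /collapse_layer !eqxx. Qed.

Lemma collapse_layer_off f q : q.1 != u -> collapse_layer f q = f q.
Proof. by rewrite /collapse_layer => /negbTE ->. Qed.

Lemma le_off_layer_collapse f : le_off_layer f (collapse_layer f).
Proof. by move=> q qu; rewrite collapse_layer_off. Qed.

Lemma collapse_layer_defends f p :
  secure_dom100 GH f -> collapse_layer f p = 0 ->
  exists x, [/\ adj GH p x, 0 < collapse_layer f x
               & dom100 GH (fmove (collapse_layer f) x p)].
Proof.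
move=> [_ [domf secf]] p0.
have p_hub : p != (u, h).
  by apply: contra_eqN p0 => /eqP ->; rewrite collapse_layer_hub.
have [near|far] := boolP ((p.1 == u) || adj G p.1 u).
  exists (u, h); split; [exact: lex_adj_hub | by rewrite collapse_layer_hub |].
  have move_hub : 1 <= fmove (collapse_layer f) (u, h) p (u, h).
    by rewrite /fmove eq_sym (negbTE p_hub) eqxx collapse_layer_hub.
  have off_move q : q.1 != u -> q != p ->
      fmove (collapse_layer f) (u, h) p q = f q.
    move=> qu /negbTE qp.
    have /negbTE q_hub : q != (u, h) by apply: contraNneq qu => ->.
    by rewrite /fmove qp q_hub collapse_layer_off.
  have [pu|pu] := eqVneq p.1 u.
    apply: (dom100_hub domf) => // q qu; rewrite off_move //.
    by apply: contraNneq qu => ->; rewrite pu.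
  have [x [_ _ domx]] := secf p (etrans (esym (collapse_layer_off _ pu)) p0).
  apply: (dom100_hub domx) => // q qu; have [-> | qp] := eqVneq q p.
    by rewrite /fmove !eqxx.
  rewrite off_move // /fmove (negbTE qp); case: eqP => [-> | _] //; exact: leq_pred.
rewrite negb_or in far; case/andP: far => pu nadj.
have [x [px fx domx]] := secf p (etrans (esym (collapse_layer_off _ pu)) p0).
have xu := lex_adj_off_layer pu nadj px.
exists x; split; rewrite ?collapse_layer_off //.
apply: (dom100_hub domx); last exact/le_off_layer_fmove/le_off_layer_collapse.
have /negbTE x_hub : (u, h) != x by apply: contraNneq xu => <-.
by rewrite /fmove eq_sym (negbTE p_hub) x_hub collapse_layer_hub.
Qed.

Lemma collapse_layer_secure f :
  secure_dom100 GH f -> secure_dom100 GH (collapse_layer f).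
Proof.
move=> secf; have [labf [domf _]] := secf.
split.
  by move=> p; rewrite /collapse_layer; case: ifP => _; [case: ifP | apply: labf].
split; last by move=> p; apply: collapse_layer_defends.
apply: (dom100_hub domf); last exact: le_off_layer_collapse.
by rewrite collapse_layer_hub.
Qed.

Lemma weight_layer_split (f : T1 * T2 -> nat) :
  weight f = \sum_(y : T2) f (u, y) + \sum_(x | x != u) \sum_(y : T2) f (x, y).
Proof.
rewrite /weight (eq_bigr (fun p => f (p.1, p.2))); last by case.
by rewrite -(pair_bigA _ (fun a b => f (a, b))) (bigD1 u).
Qed.

Lemma collapse_layer_weight f :
  2 < \sum_(y : T2) f (u, y) -> weight (collapse_layer f) < weight f.
Proof.
move=> heavy; rewrite !weight_layer_split.
have -> : \sum_(y : T2) collapse_layer f (u, y) = 2.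
  rewrite (bigD1 h) //= big1 => [|y /negbTE yh];
    by rewrite /collapse_layer /= !eqxx ?yh.
have -> : \sum_(x | x != u) \sum_(y : T2) collapse_layer f (x, y) =
          \sum_(x | x != u) \sum_(y : T2) f (x, y).
  by apply: eq_bigr => x xu; apply: eq_bigr => y _; rewrite collapse_layer_off.
by rewrite ltn_add2r.
Qed.

End Layer.

Theorem lemma14 (T1 T2 : finType) (G : sgraph T1) (H : sgraph T2) :
  no_isolated G -> 2 <= #|T2| -> gamma H = 1 ->
  exists f : prod T1 T2 -> nat,
    wrd_function (lexprod G H) f /\
    forall u : T1, \sum_(y : T2) f (u, y) <= 2.
Proof.
move=> _ _ /gamma_eq1_dominating_vertex [h h_dom].
have [f [secf minf]] := wrd_function_exists (lexprod G H).
exists f; split => // u; rewrite leqNgt; apply/negP => heavy.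
have := collapse_layer_weight h heavy; rewrite ltnNge => /negP; apply.
exact/minf/collapse_layer_secure.
Qed.
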